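(* Let $\Sigma=\Sigma_p\cup\Sigma_d$ be a finite propositional alphabet partitioned into parameter symbols $\Sigma_p$ and defined symbols $\Sigma_d$. For each $I\in 2^{\Sigma_p}$ let $\pi_I:L^d_p\to 2^{\Sigma_d}$ map $\mathcal{A}$ to $\mathcal{A}^I=\{a\in\Sigma_d\mid \psi_a^I=\mathbf{t}\text{ where }\mathcal{A}(a)=\overline{\psi_a}\}$. Then $L^d_p$ is a parametrisation of $\langle 2^{\Sigma_d},\subseteq\rangle$ through $(\pi_I)_{I\in 2^{\Sigma_p}}$.
   Context: $L_p$ is the set of equivalence classes $\overline\varphi$ (under logical equivalence) of propositional formulas over $\Sigma_p$, ordered by $\overline\varphi\leq\overline\psi$ iff $\varphi\models\psi$; it is a complete lattice. $L^d_p$ is the set of maps $\Sigma_d\to L_p$, ordered pointwise. A complete lattice $L$ is a parametrisation of a complete lattice $K$ through a family $(f_i:L\to K)_{i\in I}$ if each $f_i$ is a surjective lattice morphism (i.e. $f_i(\bigvee X)=\bigvee f_i(X)$ and $f_i(\bigwedge X)=\bigwedge f_i(X)$ for every $X\subseteq L$) and for all $x,y\in L$: $x\leq y$ iff $f_i(x)\leq f_i(y)$ for every $i\in I$. *)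

From HB Require Import structures.
From mathcomp Require Import all_boot generic_quotient.
Set Implicit Arguments. Unset Strict Implicit. Unset Printing Implicit Defensive.

Section OrderNotions.
Variables (L : Type) (le : L -> L -> Prop).

Definition is_lub (X : L -> Prop) (s : L) : Prop :=
  (forall x, X x -> le x s) /\ (forall u, (forall x, X x -> le x u) -> le s u).
Definition is_glb (X : L -> Prop) (s : L) : Prop :=
  (forall x, X x -> le s x) /\ (forall u, (forall x, X x -> le u x) -> le u s).

Definition complete_lattice : Prop :=
  [/\ (forall x, le x x),
      (forall x y, le x y -> le y x -> x = y),
      (forall x y z, le x y -> le y z -> le x z) &
      (forall X : L -> Prop, (exists s, is_lub X s) /\ (exists s, is_glb X s))].
End OrderNotions.

Definition image_pred {A B : Type} (f : A -> B) (X : A -> Prop) : B -> Prop :=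
  fun y => exists2 x, X x & y = f x.

Definition complete_lattice_morphism {L K : Type}
  (leL : L -> L -> Prop) (leK : K -> K -> Prop) (f : L -> K) : Prop :=
  forall X : L -> Prop,
    (forall s, is_lub leL X s -> is_lub leK (image_pred f X) (f s)) /\
    (forall s, is_glb leL X s -> is_glb leK (image_pred f X) (f s)).

Definition parametrisation {L K I : Type}
  (leL : L -> L -> Prop) (leK : K -> K -> Prop) (f : I -> L -> K) : Prop :=
  [/\ complete_lattice leL, complete_lattice leK,
      (forall i, (forall y : K, exists x : L, f i x = y) /\
                 complete_lattice_morphism leL leK (f i)) &
      (forall x y : L, leL x y <-> (forall i, leK (f i x) (f i y)))].

Inductive formula (P : Type) : Type :=
| Atom of P
| FTrue
| FFalse
| FNot of formula P
| FAnd of formula P & formula P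
| FOr of formula P & formula P
| FImp of formula P & formula P.
Arguments FTrue {P}. Arguments FFalse {P}.

Section Formulas.
Variable P : finType.

Fixpoint eval (I : {set P}) (f : formula P) : bool :=
  match f with
  | Atom p => p \in I
  | FTrue => true
  | FFalse => false
  | FNot g => ~~ eval I g
  | FAnd g h => eval I g && eval I h
  | FOr g h => eval I g || eval I h
  | FImp g h => eval I g ==> eval I h
  end.

Definition entails (f g : formula P) : bool := [forall I : {set P}, eval I f ==> eval I g].
Definition fequiv (f g : formula P) : bool := [forall I : {set P}, eval I f == eval I g].

Fixpoint enc (f : formula P) : GenTree.tree P :=
  match f with
  | Atom p => GenTree.Leaf p
  | FTrue => GenTree.Node 0 [::]
  | FFalse => GenTree.Node 1 [::]
  | FNot g => GenTree.Node 2 [:: enc g]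
  | FAnd g h => GenTree.Node 3 [:: enc g; enc h]
  | FOr g h => GenTree.Node 4 [:: enc g; enc h]
  | FImp g h => GenTree.Node 5 [:: enc g; enc h]
  end.

Fixpoint dec (t : GenTree.tree P) : option (formula P) :=
  match t with
  | GenTree.Leaf p => Some (Atom p)
  | GenTree.Node 0 [::] => Some FTrue
  | GenTree.Node 1 [::] => Some FFalse
  | GenTree.Node 2 [:: a] => omap (@FNot P) (dec a)
  | GenTree.Node 3 [:: a; b] =>
      if dec a is Some g then omap (FAnd g) (dec b) else None
  | GenTree.Node 4 [:: a; b] =>
      if dec a is Some g then omap (FOr g) (dec b) else None
  | GenTree.Node 5 [:: a; b] =>
      if dec a is Some g then omap (FImp g) (dec b) else None
  | _ => None
  end.

Lemma encK : pcancel enc dec.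
Proof. by elim=> //= [g -> | g -> h -> | g -> h -> | g -> h ->]. Qed.

End Formulas.

HB.instance Definition _ (P : finType) := Countable.copy (formula P) (pcan_type (@encK P)).

Section Quot.
Variable P : finType.

Lemma fequiv_refl : reflexive (@fequiv P).
Proof. by move=> f; apply/forallP. Qed.
Lemma fequiv_sym : symmetric (@fequiv P).
Proof.
by move=> f g; apply/forallP/forallP=> H I; rewrite eq_sym; apply: H.
Qed.
Lemma fequiv_trans : transitive (@fequiv P).
Proof.
move=> g f h /forallP H1 /forallP H2; apply/forallP=> I.
by rewrite (eqP (H1 I)) H2.
Qed.

Canonical fequiv_equiv := EquivRel (@fequiv P) fequiv_refl fequiv_sym fequiv_trans.

Definition Lp : Type := {eq_quot (@fequiv P)}%qT.

Definition Lp_le (x y : Lp) : Prop := entails (repr x) (repr y).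
End Quot.

Definition Ldp (P D : finType) : Type := D -> Lp P.
Definition Ldp_le (P D : finType) (A B : Ldp P D) : Prop :=
  forall a : D, Lp_le (A a) (B a).

Definition pi_map (P D : finType) (I : {set P}) (A : Ldp P D) : {set D} :=
  [set a | eval I (repr (A a))].

Definition subset_le (D : finType) (X Y : {set D}) : Prop := X \subset Y.

From mathcomp Require Import all_boot generic_quotient boolp.
Set Implicit Arguments. Unset Strict Implicit. Unset Printing Implicit Defensive.

(* Over a finite alphabet every set of interpretations is the model set of a
   formula (its disjunctive normal form), so [A : L^d_p] is determined by, and
   may be any, relation [G_A ⊆ 2^Σp × Σd], namely [(I, a) ∈ G_A] iff [I]
   satisfies [A(a)]; moreover [A ≤ B] iff [G_A ⊆ G_B], and [π_I A] is the
   slice of [G_A] at [I].  A powerset ordered by inclusion is a complete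
   lattice, its suprema and infima are unions and intersections, and these
   commute with taking slices; parametrisations transfer along order
   isomorphisms. *)

Local Open Scope quotient_scope.

Lemma eq_is_lub (L : Type) (le : L -> L -> Prop) (X Y : L -> Prop) s :
  (forall x, X x <-> Y x) -> is_lub le X s -> is_lub le Y s.
Proof.
move=> XY [ub least]; split=> [x /XY|u uY]; first exact: ub.
by apply: least => x /XY; apply: uY.
Qed.

Lemma image_pred_comp (A B C : Type) (f : B -> C) (g : A -> B) X z :
  image_pred f (image_pred g X) z <-> image_pred (f \o g) X z.
Proof.
split=> [[_ [x Xx ->] ->]|[x Xx ->]]; first by exists x.
by exists (g x) => //; exists x.
Qed.

Section OrderEmbedding.
Variables (L M : Type) (g : L -> M).
Hypothesis g_surj : forall y, exists x, g x = y.

Section Lub.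
Variables (leL : L -> L -> Prop) (leM : M -> M -> Prop).
Hypothesis g_mono : forall x y, leL x y <-> leM (g x) (g y).

Lemma is_lub_image X s : is_lub leL X s -> is_lub leM (image_pred g X) (g s).
Proof.
move=> [ub least]; split=> [_ [x Xx ->]|u uX]; first by apply/g_mono/ub.
have [v gv] := g_surj u; rewrite -gv in uX *; apply/g_mono/least => x Xx.
by apply/g_mono; apply: uX; exists x.
Qed.

Lemma is_lub_preimage X s : is_lub leM (image_pred g X) (g s) -> is_lub leL X s.
Proof.
move=> [ub least]; split=> [x Xx|u uX]; first by apply/g_mono/ub; exists x.
by apply/g_mono/least => _ [x Xx ->]; apply/g_mono; apply: uX.
Qed.
End Lub.

Variables (leL : L -> L -> Prop) (leM : M -> M -> Prop).
Hypotheses (g_inj : injective g) (g_mono : forall x y, leL x y <-> leM (g x) (g y)).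

(* An infimum is a supremum for the reversed order, and [g] is also an
   embedding for the reversed orders. *)
Let g_mono_rev x y : leL y x <-> leM (g y) (g x). Proof. exact: g_mono. Qed.

Lemma complete_lattice_embedding :
  complete_lattice leM -> complete_lattice leL.
Proof.
case=> refl anti trans ex_bounds; split.
- by move=> x; apply/g_mono.
- by move=> x y /g_mono xy /g_mono yx; apply/g_inj/anti.
- by move=> x y z /g_mono xy /g_mono yz; apply/g_mono; apply: trans yz.
move=> X; have [[t tlub] [t' tglb]] := ex_bounds (image_pred g X).
have [s gs] := g_surj t; have [s' gs'] := g_surj t'.
rewrite -gs in tlub; rewrite -gs' in tglb; split; [exists s | exists s'].
  exact: (is_lub_preimage g_mono tlub).
exact: (is_lub_preimage (leL := fun x y => leL y x) (leM := fun x y => leM y x)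
          g_mono_rev tglb).
Qed.

Lemma parametrisation_embedding (K I : Type) (leK : K -> K -> Prop)
    (f : I -> M -> K) (h : I -> L -> K) :
  (forall i x, h i x = f i (g x)) ->
  parametrisation leM leK f -> parametrisation leL leK h.
Proof.
move=> hE [cM cK f_morph f_refl]; split=> //.
- exact: complete_lattice_embedding.
- move=> i; have [f_surj f_hom] := f_morph i; split.
    by move=> y; have [z <-] := f_surj y; have [x <-] := g_surj z; exists x.
  move=> X; have [f_lub f_glb] := f_hom (image_pred g X).
  have image_h z : image_pred (f i) (image_pred g X) z <-> image_pred (h i) X z.
    by rewrite (image_pred_comp (f i) g); split=> -[x Xx ->]; exists x; rewrite ?hE.
  split=> s sX; rewrite hE; apply: eq_is_lub image_h _.
    exact/f_lub/(is_lub_image g_mono).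
  apply/f_glb.
  exact: (is_lub_image (leL := fun x y => leL y x) (leM := fun x y => leM y x)
            g_mono_rev sX).
- by move=> x y; rewrite g_mono f_refl; split=> xy i; move: (xy i); rewrite !hE.
Qed.
End OrderEmbedding.

Section SubsetLattice.
Variable T : finType.

Definition set_sup (X : {set T} -> Prop) : {set T} :=
  [set t | `[< exists2 Y, X Y & t \in Y >]].
Definition set_inf (X : {set T} -> Prop) : {set T} :=
  [set t | `[< forall Y, X Y -> t \in Y >]].

Lemma set_sup_is_lub X : is_lub (@subset_le T) X (set_sup X).
Proof.
split=> [Y XY|U UX]; apply/subsetP=> t; rewrite ?inE.
  by move=> tY; apply/asboolP; exists Y.
by move=> /asboolP[Y /UX /subsetP]; apply.
Qed.

Lemma set_inf_is_glb X : is_glb (@subset_le T) X (set_inf X).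
Proof.
split=> [Y XY|U UX]; apply/subsetP=> t; rewrite ?inE.
  by move=> /asboolP; apply.
by move=> tU; apply/asboolP=> Y /UX /subsetP; apply.
Qed.

Lemma is_lub_subsetE X s : is_lub (@subset_le T) X s -> s = set_sup X.
Proof.
have [ub least] := set_sup_is_lub X; move=> [ub' least'].
by apply/eqP; rewrite eqEsubset least' // least.
Qed.

Lemma is_glb_subsetE X s : is_glb (@subset_le T) X s -> s = set_inf X.
Proof.
have [lb greatest] := set_inf_is_glb X; move=> [lb' greatest'].
by apply/eqP; rewrite eqEsubset greatest // greatest'.
Qed.

Lemma complete_lattice_subset : complete_lattice (@subset_le T).
Proof.
split=> [S|S S' SS' S'S|S1 S2 S3|X]; rewrite /subset_le.
- exact: subxx.
- by apply/eqP; rewrite eqEsubset SS'.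
- exact: subset_trans.
by split; [exists (set_sup X); apply: set_sup_is_lub
          | exists (set_inf X); apply: set_inf_is_glb].
Qed.
End SubsetLattice.

Section Slices.
Variables I D : finType.

Definition slice (i : I) (S : {set I * D}) : {set D} := [set d | (i, d) \in S].

Lemma slice_cylinder i (Y : {set D}) : slice i [set p | p.2 \in Y] = Y.
Proof. by apply/setP=> d; rewrite !inE. Qed.

Lemma slice_set_sup i X :
  slice i (set_sup X) = set_sup (image_pred (slice i) X).
Proof.
apply/setP=> d; rewrite !inE; apply/asboolP/asboolP=> [[S XS idS]|[_ [S XS ->]]].
  by exists (slice i S); [exists S | rewrite inE].
by rewrite inE; exists S.
Qed.

Lemma slice_set_inf i X :
  slice i (set_inf X) = set_inf (image_pred (slice i) X).
Proof.
apply/setP=> d; rewrite !inE; apply/asboolP/asboolP=> [XidS _ [S XS ->]|XdS S XS].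
  by rewrite inE; apply: XidS.
by have := XdS _ (ex_intro2 _ _ S XS erefl); rewrite inE.
Qed.

Lemma slice_morphism i :
  complete_lattice_morphism (@subset_le _) (@subset_le D) (slice i).
Proof.
move=> X; split=> s.
  by move=> /is_lub_subsetE->; rewrite slice_set_sup; apply: set_sup_is_lub.
by move=> /is_glb_subsetE->; rewrite slice_set_inf; apply: set_inf_is_glb.
Qed.

Lemma subset_slicesP (S S' : {set I * D}) :
  S \subset S' <-> forall i, slice i S \subset slice i S'.
Proof.
split=> [/subsetP SS' i|SS']; apply/subsetP.
  by move=> d; rewrite !inE; apply: SS'.
by move=> [i d] idS; have /subsetP/(_ d) := SS' i; rewrite !inE; apply.
Qed.

Lemma parametrisation_slices :
  parametrisation (@subset_le (I * D)%type) (@subset_le D) slice.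
Proof.
split; try exact: complete_lattice_subset.
  by move=> i; split; [move=> Y; exists [set p | p.2 \in Y]; apply: slice_cylinder
                      | apply: slice_morphism].
exact: subset_slicesP.
Qed.
End Slices.

Section Definability.
Variable P : finType.

Definition minterm (I : {set P}) : formula P :=
  foldr (fun p f => FAnd (if p \in I then Atom p else FNot (Atom p)) f) FTrue (enum P).

Lemma eval_minterm J I : eval J (minterm I) = (J == I).
Proof.
have -> : eval J (minterm I) = all (fun p => (p \in J) == (p \in I)) (enum P).
  rewrite /minterm; elim: (enum P) => //= p s ->.
  by case: (p \in I) => /=; case: (p \in J).
apply/allP/eqP=> [JI|->]; last by move=> p _.
by apply/setP=> p; apply/eqP/JI; rewrite mem_enum.
Qed.

Definition dnf (S : {set {set P}}) : formula P :=
  foldr (fun I f => FOr (minterm I) f) FFalse (enum S).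

Lemma eval_dnf J S : eval J (dnf S) = (J \in S).
Proof.
rewrite /dnf -mem_enum; elim: (enum S) => //= I s ->.
by rewrite eval_minterm in_cons.
Qed.

Lemma eval_repr_pi (f : formula P) J :
  eval J (repr (\pi_(Lp P) f)) = eval J f.
Proof.
have /forallP/(_ J)/eqP // : fequiv (repr (\pi_(Lp P) f)) f.
by apply/eqquotP; exact: reprK.
Qed.

Lemma Lp_eval_inj (x y : Lp P) :
  (forall J, eval J (repr x) = eval J (repr y)) -> x = y.
Proof.
by move=> xy; rewrite -[x]reprK -[y]reprK; apply/eqquotP/forallP=> J; rewrite xy.
Qed.
End Definability.

Section Graph.
Variables P D : finType.

Definition Ldp_graph (A : Ldp P D) : {set {set P} * D} :=
  [set p | eval p.1 (repr (A p.2))].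

Lemma Ldp_graph_inj : injective Ldp_graph.
Proof.
move=> A B /setP AB; apply: funext=> a; apply: Lp_eval_inj=> J.
by have := AB (J, a); rewrite !inE.
Qed.

Lemma Ldp_graph_surj S : exists A, Ldp_graph A = S.
Proof.
exists (fun a => \pi_(Lp P) (dnf [set J | (J, a) \in S])).
by apply/setP=> -[J a]; rewrite !inE eval_repr_pi eval_dnf inE.
Qed.

Lemma Ldp_le_graph A B : Ldp_le A B <-> Ldp_graph A \subset Ldp_graph B.
Proof.
split=> [AB|/subsetP AB a]; first apply/subsetP=> -[J a].
  by rewrite !inE; move: (AB a) => /forallP/(_ J)/implyP.
by apply/forallP=> J; apply/implyP=> AJ; have := AB (J, a); rewrite !inE; apply.
Qed.

Lemma pi_map_slice I A : pi_map I A = slice I (Ldp_graph A).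
Proof. by apply/setP=> a; rewrite !inE. Qed.
End Graph.

Theorem proposition4p6 (Sp Sd : finType) :
  parametrisation (@Ldp_le Sp Sd) (@subset_le Sd) (fun I : {set Sp} => @pi_map Sp Sd I).
Proof.
apply: (parametrisation_embedding (@Ldp_graph_surj Sp Sd) (@Ldp_graph_inj Sp Sd)
          (@Ldp_le_graph Sp Sd) (@pi_map_slice Sp Sd)).
exact: parametrisation_slices.
Qed.
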